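(* Let $N>1$, $d\ge1$, and let $f:\mathbb{R}^{N\times d}\times\mathbb{R}^{N\times 3}\to Y$ (any set $Y$) satisfy $f(s,\vec r o^T)=f(s,\vec r)$ for all $o\in\mathrm{O}(3)$ and $f(s,\vec r+\mathbf{1}t)=f(s,\vec r)$ for all $t\in\mathbb{R}^{1\times 3}$, where $\mathbf 1\in\mathbb{R}^{N\times1}$ is the all-ones column. Let $g$ be any function with the properties stated in the context, and for each molecule $(s,\vec r)$ let $\vec E_1=g(\mathrm{LE}_1)$. Then there exist functions $\varphi$, $\rho$ and $h$ such that for all $(s,\vec r)$, $$f(s,\vec r)=h(z_1),\qquad z_1=\rho\Big(\sum_{j=1}^N\varphi\big(\mathrm{Concatenate}(\vec r_{1j}\vec E_1^T,\ \tilde s_j)\big)\Big).$$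
   Context: For a molecule with features $s\in\mathbb{R}^{N\times d}$ (row $s_j$) and coordinates $\vec r\in\mathbb{R}^{N\times 3}$ (row $\vec r_j$), set $\vec r_{ij}=\vec r_i-\vec r_j$, node identity features $\tilde s_j=\mathrm{Concatenate}(s_j,j)\in\mathbb{R}^{d+1}$ and local environments $\mathrm{LE}_i=\{(\tilde s_j,\vec r_{ij}): j=1,\dots,N\}$. $\mathrm{O}(3)=\{Q\in\mathbb{R}^{3\times3}:QQ^T=I\}$. The function $g$ maps such local environments to $\mathbb{R}^{3\times3}$, satisfies $g(\{(\tilde s_j,\vec r_{ij}o^T)\}_j)=g(\{(\tilde s_j,\vec r_{ij})\}_j)o^T$ for all $o\in\mathrm{O}(3)$, and for every molecule and $i$ the matrix $\vec E_i=g(\mathrm{LE}_i)$, with $k=\mathrm{rank}(\vec E_i)$, has its first $k$ rows forming an orthonormal basis of $\mathrm{span}\{\vec r_{ij}:j=1,\dots,N\}$ and its remaining rows zero. *)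

From HB Require Import structures.
From mathcomp Require Import all_boot all_order all_algebra.
From mathcomp Require Import finmap.
From mathcomp Require Import reals.
Set Implicit Arguments. Unset Strict Implicit. Unset Printing Implicit Defensive.
Import Order.TTheory GRing.Theory Num.Theory.
Local Open Scope ring_scope.
Local Open Scope fset_scope.

Section Molecules.
Variables (R : realType) (N d : nat).

Definition rij (r : 'M[R]_(N, 3)) (i j : 'I_N) : 'rV[R]_3 := row i r - row j r.

(* node identity feature  \tilde s_j = Concatenate(s_j, j), with the paper's
   1-based index j = 1..N  (Rocq ordinal j : 'I_N stands for paper index j+1) *)
Definition stilde (s : 'M[R]_(N, d)) (j : 'I_N) : 'rV[R]_(d + 1) :=
  row_mx (row j s) (const_mx (j.+1)%:R).

Definition LE (s : 'M[R]_(N, d)) (r : 'M[R]_(N, 3)) (i : 'I_N)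
  : {fset ('rV[R]_(d + 1) * 'rV[R]_3)} :=
  [fset (stilde s j, rij r i j) | j : 'I_N].

Definition orthogonal3 (o : 'M[R]_3) : Prop := o *m o^T = 1%:M.

Definition frame_ok (E : 'M[R]_3) (r : 'M[R]_(N, 3)) (i : 'I_N) : Prop :=
  let k := \rank E in
  [/\ (forall a b : 'I_3, (a < k)%N -> (b < k)%N ->
         row a E *m (row b E)^T = ((a == b)%:R)%:M),
      (forall a : 'I_3, (k <= a)%N -> row a E = 0) &
      (E == \matrix_(j < N) rij r i j)%MS].

Definition frame_fun
  (g : {fset ('rV[R]_(d + 1) * 'rV[R]_3)} -> 'M[R]_3) : Prop :=
  (forall (s : 'M[R]_(N, d)) (r : 'M[R]_(N, 3)) (i : 'I_N) (o : 'M[R]_3),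
      orthogonal3 o ->
      g [fset (stilde s j, rij r i j *m o^T) | j : 'I_N] = g (LE s r i) *m o^T)
  /\ (forall (s : 'M[R]_(N, d)) (r : 'M[R]_(N, 3)) (i : 'I_N),
      frame_ok (g (LE s r i)) r i).

End Molecules.

From HB Require Import structures.
From mathcomp Require Import all_boot all_order all_algebra.
From mathcomp Require Import finmap.
From mathcomp Require Import reals.
From mathcomp Require Import ring lra.
Set Implicit Arguments. Unset Strict Implicit. Unset Printing Implicit Defensive.
Import Order.TTheory GRing.Theory Num.Theory.
Local Open Scope ring_scope.

(* The last entry of stilde s j is the index j + 1, so a phi that places its
   argument in the row named by that entry turns the sum over j into the
   matrix whose rows are the inputs; from it h reads off s and P E_1^T, where
   P has rows r_1 - r_j.  The orthonormal rows of E_1 complete to an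
   orthogonal o with E_1 = pid_mx k *m o, and since the rows of P lie in the
   row space of E_1, P E_1^T = P o^T.  Invariance of f under O(3) and
   translations then gives f s r = f s (- P o^T). *)

Section MatrixRows.
Variable R : pzSemiRingType.

Lemma matrix_row_mx m n1 n2 (u : 'I_m -> 'rV[R]_n1) (v : 'I_m -> 'rV[R]_n2) :
  \matrix_i row_mx (u i) (v i) = row_mx (\matrix_i u i) (\matrix_i v i).
Proof. by apply/row_matrixP => i; rewrite row_row_mx !rowK. Qed.

Lemma matrix_rowK m n (A : 'M[R]_(m, n)) : \matrix_i row i A = A.
Proof. by apply/row_matrixP => i; rewrite rowK. Qed.

Lemma matrix_mulmx m n p (u : 'I_m -> 'rV[R]_n) (B : 'M[R]_(n, p)) :
  \matrix_i (u i *m B) = (\matrix_i u i) *m B.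
Proof. by apply/row_matrixP => i; rewrite row_mul !rowK. Qed.

Lemma row_pid_mul n k (a : 'I_n) (o : 'M[R]_n) :
  row a (pid_mx k *m o) = if (a < k)%N then row a o else 0.
Proof.
rewrite row_mul; case: ltnP => [ak|ka].
  rewrite [row a o]rowE; congr (_ *m _).
  by apply/rowP => b; rewrite !mxE ak andbT eq_sym.
apply/rowP => b; rewrite !mxE big1 // => c _.
by rewrite !mxE (leq_gtF ka) andbF mul0r.
Qed.

End MatrixRows.

Section Slot.
Variables (R : numDomainType) (N m : nat) (l : 'I_m).

Definition slot (x : 'rV[R]_m) : 'M[R]_(N, m) :=
  \matrix_(i < N) (if x 0 l == i.+1%:R then x else 0).

Lemma sum_slot (x : 'I_N -> 'rV[R]_m) :
  (forall j, x j 0 l = j.+1%:R) -> \sum_j slot (x j) = \matrix_j x j.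
Proof.
move=> xl; apply/matrixP => i c; rewrite summxE (bigD1 i) //= big1 ?addr0.
  by rewrite !mxE xl eqxx.
by move=> j ji; rewrite !mxE xl eqr_nat eqSS ifN ?mxE.
Qed.

End Slot.

Section Dot.
Variable R : comPzRingType.

Definition vdot n (u v : 'rV[R]_n) : R := (u *m v^T) 0 0.

Lemma vdotC n (u v : 'rV[R]_n) : vdot u v = vdot v u.
Proof. by rewrite /vdot -[v *m u^T]trmxK trmx_mul !trmxK [RHS]mxE. Qed.

Lemma mulmx_trE m p n (A : 'M[R]_(m, n)) (B : 'M[R]_(p, n)) a b :
  (A *m B^T) a b = vdot (row a A) (row b B).
Proof. by rewrite /vdot !mxE; apply: eq_bigr => c _; rewrite !mxE. Qed.

End Dot.

Section Euclid3.
Variable R : comPzRingType.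
Implicit Types u v : 'rV[R]_3.

Lemma vdot3E u v : vdot u v = u 0 0 * v 0 0 + u 0 1 * v 0 1 + u 0 2 * v 0 2.
Proof.
rewrite /vdot mxE !big_ord_recl big_ord0 addr0 !mxE addrA.
by congr (_ * _ + _ * _ + _ * _); congr (_ _ _); apply: val_inj.
Qed.

Definition cross u v : 'rV[R]_3 :=
  \row_(i < 3) [:: u 0 1 * v 0 2 - u 0 2 * v 0 1;
                  u 0 2 * v 0 0 - u 0 0 * v 0 2;
                  u 0 0 * v 0 1 - u 0 1 * v 0 0]`_i.

Lemma vdot_crossl u v : vdot (cross u v) u = 0.
Proof. by rewrite vdot3E !mxE /=; ring. Qed.

Lemma vdot_crossr u v : vdot (cross u v) v = 0.
Proof. by rewrite vdot3E !mxE /=; ring. Qed.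

Lemma vdot_cross u v :
  vdot (cross u v) (cross u v) = vdot u u * vdot v v - vdot u v ^+ 2.
Proof. by rewrite !vdot3E !mxE /=; ring. Qed.

Definition frame3 u v w : 'M[R]_3 := \matrix_(a < 3) [:: u; v; w]`_a.

Lemma frame3_cross_orthogonal u v :
  vdot u u = 1 -> vdot v v = 1 -> vdot u v = 0 ->
  frame3 u v (cross u v) *m (frame3 u v (cross u v))^T = 1%:M.
Proof.
move=> uu vv uv; apply/matrixP => a b; rewrite mulmx_trE !rowK !mxE.
have vu : vdot v u = 0 by rewrite vdotC.
have wu : vdot u (cross u v) = 0 by rewrite vdotC vdot_crossl.
have wv : vdot v (cross u v) = 0 by rewrite vdotC vdot_crossr.
have ww : vdot (cross u v) (cross u v) = 1 by rewrite vdot_cross uu vv uv; ring.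
by case: a b => [[|[|[|//]]] ?] [[|[|[|//]]] ?] /=;
  rewrite ?uu ?vv ?ww ?uv ?vu ?wu ?wv ?vdot_crossl ?vdot_crossr.
Qed.

End Euclid3.

Section OrthonormalCompletion.
Variable R : rcfType.

Lemma unit_orthogonal (u : 'rV[R]_3) :
  vdot u u = 1 -> exists2 p : 'rV[R]_3, vdot p p = 1 & vdot u p = 0.
Proof.
move=> uu; have [u01|u01] := eqVneq (u 0 0 ^+ 2 + u 0 1 ^+ 2) 0.
  have u0 : u 0 0 = 0 by apply/eqP; rewrite -sqrf_eq0; apply/eqP; nra.
  exists (\row_(i < 3) [:: 1; 0; 0]`_i); rewrite vdot3E !mxE /= ?u0; ring.
have t_gt0 : 0 < u 0 0 ^+ 2 + u 0 1 ^+ 2.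
  by rewrite lt_def u01 addr_ge0 ?sqr_ge0.
pose t := Num.sqrt (u 0 0 ^+ 2 + u 0 1 ^+ 2).
have tt : t ^+ 2 = u 0 0 ^+ 2 + u 0 1 ^+ 2 by rewrite sqr_sqrtr ?ltW.
have t_neq0 : t != 0 by rewrite sqrtr_eq0 -ltNge.
exists (\row_(i < 3) [:: - u 0 1 / t; u 0 0 / t; 0]`_i); rewrite vdot3E !mxE /=.
  by apply: (mulIf (expf_neq0 2 t_neq0)); rewrite mul1r {2}tt; field.
by field.
Qed.

Lemma orthonormal_rows_completion k (E : 'M[R]_3) :
  (k <= 3)%N ->
  (forall a b : 'I_3, (a < k)%N -> (b < k)%N ->
     row a E *m (row b E)^T = ((a == b)%:R)%:M) ->
  (forall a : 'I_3, (k <= a)%N -> row a E = 0) ->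
  exists2 o : 'M[R]_3, o *m o^T = 1%:M & E = pid_mx k *m o.
Proof.
move=> k3 orth vanish.
have dotE (a b : 'I_3) :
    (a < k)%N -> (b < k)%N -> vdot (row a E) (row b E) = (a == b)%:R.
  by move=> ak bk; rewrite /vdot orth // mxE eqxx mulr1n.
suff [o oo oE] : exists2 o : 'M[R]_3,
    o *m o^T = 1%:M & forall a : 'I_3, (a < k)%N -> row a o = row a E.
  exists o => //; apply/row_matrixP => a; rewrite row_pid_mul.
  by case: ltnP => [/oE|/vanish] ->.
case: k k3 dotE {orth vanish} => [|[|[|[|//]]]] _ dotE.
- by exists 1%:M; rewrite ?trmx1 ?mulmx1.
- have [p pp up] := unit_orthogonal (dotE 0 0 isT isT).
  exists (frame3 (row 0 E) p (cross (row 0 E) p)).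
    exact: frame3_cross_orthogonal (dotE 0 0 isT isT) pp up.
  by case=> [[|//] ?] _; rewrite rowK /=; congr row; apply: val_inj.
- exists (frame3 (row 0 E) (row 1 E) (cross (row 0 E) (row 1 E))).
    exact: frame3_cross_orthogonal (dotE 0 0 isT isT) (dotE 1 1 isT isT)
      (dotE 0 1 isT isT).
  by case=> [[|[|//]] ?] _; rewrite rowK /=; congr row; apply: val_inj.
- exists E => //; apply/matrixP => a b.
  by rewrite mulmx_trE dotE ?mxE.
Qed.

End OrthonormalCompletion.

Lemma mulmx_tr_pid_mul (F : fieldType) m n k (A : 'M[F]_(m, n))
    (E o : 'M[F]_n) :
  o *m o^T = 1%:M -> E = pid_mx k *m o -> (A <= E)%MS -> A *m E^T = A *m o^T.
Proof.
move=> oo -> /submxP [D ->].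
rewrite trmx_mul tr_pid_mx -!mulmxA [o *m (o^T *m _)]mulmxA oo mul1mx.
by rewrite mul_pid_mx minnn pid_mx_minh mulmxA mulmx1.
Qed.

Lemma matrix_rij (R : realType) N (r : 'M[R]_(N, 3)) (i : 'I_N) :
  \matrix_j rij r i j = const_mx 1 *m row i r - r.
Proof. by apply/matrixP => j c; rewrite !mxE big_ord1 !mxE mul1r. Qed.

Theorem proposition7 (R : realType) (N d : nat) (hN : (1 < N)%N) (hd : (0 < d)%N)
  (Y : Type) (f : 'M[R]_(N, d) -> 'M[R]_(N, 3) -> Y)
  (f_O3 : forall (s : 'M[R]_(N, d)) (r : 'M[R]_(N, 3)) (o : 'M[R]_3),
      orthogonal3 o -> f s (r *m o^T) = f s r)
  (f_transl : forall (s : 'M[R]_(N, d)) (r : 'M[R]_(N, 3)) (t : 'rV[R]_3),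
      f s (r + (const_mx 1 : 'cV[R]_N) *m t) = f s r)
  (g : {fset ('rV[R]_(d + 1) * 'rV[R]_3)} -> 'M[R]_3)
  (hg : frame_fun N g) :
  let i1 : 'I_N := Ordinal (ltnW hN) in
  exists (Z : zmodType) (W : Type) (phi : 'rV[R]_(3 + (d + 1)) -> Z)
         (rho : Z -> W) (h : W -> Y),
    forall (s : 'M[R]_(N, d)) (r : 'M[R]_(N, 3)),
      let E1 := g (LE s r i1) in
      f s r = h (rho (\sum_(j < N) phi (row_mx (rij r i1 j *m E1^T) (stilde s j)))).
Proof.
move=> i1; have [_ frame] := hg.
pose index_col : 'I_(3 + (d + 1)) := rshift 3 (rshift d (ord0 : 'I_1)).
exists _, _, (slot N index_col), id, (fun M => f (lsubmx (rsubmx M)) (- lsubmx M)).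
move=> s r E1 /=.
rewrite sum_slot => [|j]; last by rewrite row_mxEr /stilde row_mxEr mxE.
rewrite !matrix_row_mx matrix_mulmx matrix_rowK !row_mxKr !row_mxKl.
have [orth vanish /andP [_ span]] := frame s r i1.
have [o oo E1o] := orthonormal_rows_completion (rank_leq_row _) orth vanish.
rewrite (mulmx_tr_pid_mul oo E1o span) matrix_rij -mulNmx opprB.
by rewrite f_O3 // -[r - _]/(r + - _) -mulmxN f_transl.
Qed.
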